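(* Let $p$ be a prime and $d$ a positive integer. For every dimension $k\geq d+1$ and every $S\subseteq\mathbb{F}_p^k$ with $|S|\geq\binom{d+k+1}{k}+1$, there exists a function $h:\mathbb{F}_p^k\to\mathbb{F}_p$ such that $\deg(h)=k(p-1)-(d+1)$ and $\supp(h)\subseteq S$.
   Context: Functions $\mathbb{F}_p^k\to\mathbb{F}_p$ are identified with their unique polynomial representations with individual degrees in $\{0,\dots,p-1\}$; the degree is the maximal total degree of a monomial with nonzero coefficient. $\supp(h)=\{\alpha\in\mathbb{F}_p^k: h(\alpha)\neq0\}$. *)

From mathcomp Require Import all_boot all_algebra.
From mathcomp.multinomials Require Import mpoly.
Set Implicit Arguments. Unset Strict Implicit. Unset Printing Implicit Defensive.
Import GRing.Theory.
Local Open Scope ring_scope.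

Notation pt p k := {ffun 'I_k -> 'F_p}.

Definition reduced (p k : nat) (P : {mpoly 'F_p[k]}) : Prop :=
  forall m, m \in msupp P -> forall i : 'I_k, (m i < p)%N.

Definition represents (p k : nat) (P : {mpoly 'F_p[k]}) (h : pt p k -> 'F_p) : Prop :=
  reduced P /\ forall a : pt p k, P.@[a] = h a.

(* deg(h) = D : the reduced representation of h is a nonzero polynomial of
   total degree D  (msize P = 1 + total degree, msize 0 = 0). *)
Definition has_deg (p k : nat) (h : pt p k -> 'F_p) (D : nat) : Prop :=
  exists P : {mpoly 'F_p[k]}, represents P h /\ msize P = D.+1.

Definition supp (p k : nat) (h : pt p k -> 'F_p) : {set pt p k} :=
  [set a | h a != 0].

(* Over a finite field F with q elements, the sum of x^e over F^k vanishes
   unless every exponent e_i is a positive multiple of q - 1.  Hence, with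
   K = k (q - 1), the reduced functions of degree at most K - b are orthogonal
   to all monomials of degree below b, and a dimension count shows that they
   form exactly the orthogonal complement of these monomials.  A function
   supported on S thus has degree exactly K - b iff it is orthogonal to the
   monomials of degree < b but not to those of degree <= b.  If no such
   function existed, the monomials of degree b, restricted to S, would lie in
   the span of the restrictions of those of degree < b; multiplying by the
   coordinates, so would all monomials, which span all functions on S.  Then
   |S| would be at most the number of monomials of degree < b, which is at
   most C(k + b - 1, k). *)

From mathcomp Require Import all_boot all_algebra finfield zify.
From mathcomp.multinomials Require Import mpoly.
Set Implicit Arguments. Unset Strict Implicit. Unset Printing Implicit Defensive.
Import GRing.Theory.
Local Open Scope ring_scope.

Section FiniteField.
Variable F : finFieldType.

Lemma natr_card_finField : #|F|%:R = 0 :> F.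
Proof.
have : \sum_(t : F) t = \sum_(t : F) (t + 1) by exact: reindex_inj (addIr 1).
rewrite big_split /= -{1}[\sum_t t]addr0 => /addrI.
by rewrite sumr_const cardT -cardE.
Qed.

Lemma expf_card_pred (t : F) : t != 0 -> t ^+ #|F|.-1 = 1.
Proof.
move=> t_nz; apply: (mulfI t_nz); rewrite -exprS prednK ?expf_card ?mulr1 //.
exact: ltnW (finNzRing_gt1 F).
Qed.

Lemma exists_expf_neq1 j :
  (0 < j)%N -> (j < #|F|.-1)%N -> exists2 a : F, a != 0 & a ^+ j != 1.
Proof.
move=> j_gt0 j_lt; apply/exists_inP; rewrite -negb_forall_in; apply/negP.
move=> /forall_inP all_roots.
have nz_pj : 'X^j - 1 != 0 :> {poly F}.
  by rewrite -size_poly_eq0 size_XnsubC.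
have := max_poly_roots nz_pj _ (enum_uniq (predC1 0)).
rewrite size_XnsubC // -cardE cardC1 ltnNge => /(_ _)/negP; apply => //.
apply/allP => t; rewrite mem_enum /= => t_nz.
by rewrite /root !hornerE subr_eq0 all_roots.
Qed.

Lemma sum_expr_lt_card j : (j < #|F|.-1)%N -> \sum_(t : F) t ^+ j = 0.
Proof.
case: (posnP j) => [-> _ | j_gt0 j_lt].
  by under eq_bigr do rewrite expr0; rewrite sumr_const cardT -cardE natr_card_finField.
have [a a_nz aj_neq1] := exists_expf_neq1 j_gt0 j_lt.
have scale : \sum_(t : F) t ^+ j = a ^+ j * \sum_(t : F) t ^+ j.
  rewrite mulr_sumr (reindex_inj (mulfI a_nz)).
  by apply: eq_bigr => t _; rewrite exprMn.
have : (1 - a ^+ j) * \sum_(t : F) t ^+ j = 0 by rewrite mulrBl mul1r -scale subrr.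
by move/eqP; rewrite mulf_eq0 subr_eq0 eq_sym (negbTE aj_neq1) => /eqP.
Qed.

Definition delta_poly (s : F) : {poly F} := 1 - ('X - s%:P) ^+ #|F|.-1.

Lemma size_delta_poly s : (size (delta_poly s) <= #|F|)%N.
Proof.
have card_gt0 : (0 < #|F|)%N by apply: ltnW; apply: finNzRing_gt1.
rewrite (leq_trans (size_polyD _ _)) // size_polyN size_exp_XsubC size_poly1.
by rewrite prednK // geq_max card_gt0 leqnn.
Qed.

Lemma horner_delta_poly s t : (delta_poly s).[t] = (t == s)%:R.
Proof.
rewrite !hornerE; have [-> | t_neq_s] := eqVneq t s.
  by rewrite subrr expr0n -subn1 subn_eq0 leqNgt finNzRing_gt1 subr0.
by rewrite expf_card_pred ?subrr // subr_eq0.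
Qed.

End FiniteField.

Lemma card_ffun_sum_leq n k d :
  (#|[set e : {ffun 'I_k -> 'I_n} | (\sum_i e i <= d)%N]| <= 'C(k + d, k))%N.
Proof.
pose f (e : {ffun 'I_k -> 'I_n}) : k.-tuple 'I_d.+1 := [tuple inord (e i) | i < k].
set A := [set e | _].
have f_val e i : e \in A -> (tnth (f e) i : nat) = e i.
  rewrite inE => sum_le; rewrite tnth_mktuple inordK // ltnS (leq_trans _ sum_le) //.
  by rewrite (bigD1 i) //= leq_addr.
have f_inj : {in A &, injective f}.
  move=> e e' eA e'A f_eq; apply/ffunP => i; apply: ord_inj.
  by rewrite -(f_val e) // -(f_val e') // f_eq.
rewrite -(card_in_imset f_inj) -card_partial_ord_partitions subset_leq_card //.
apply/subsetP => _ /imsetP[e eA ->]; rewrite inE big_tuple.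
under eq_bigr => i _ do rewrite f_val //.
by rewrite inE in eA.
Qed.

Lemma rank_leq_card_support (R : fieldType) m n (A : 'M[R]_(m, n))
    (I : {set 'I_m}) :
  (forall i, i \notin I -> row i A = 0) -> (\rank A <= #|I|)%N.
Proof.
move=> row_out; pose B := \matrix_(l < #|I|) row (enum_val l) A.
apply: leq_trans (rank_leq_row B); apply/mxrankS/row_subP => i.
have [i_in | /row_out ->] := boolP (i \in I); last exact: sub0mx.
by have := row_sub (enum_rank_in i_in i) B; rewrite rowK enum_rankK_in.
Qed.

Lemma kermx_sub_mxrank (R : fieldType) m n1 n2
    (A1 : 'M[R]_(m, n1)) (A2 : 'M[R]_(m, n2)) :
  (kermx A1 <= kermx A2)%MS -> (\rank A2 <= \rank A1)%N.
Proof.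
move/mxrankS; rewrite !mxrank_ker.
by have := rank_leq_row A1; have := rank_leq_row A2; lia.
Qed.

Lemma card_preim_enum_val (T : finType) (A : {set T}) :
  #|@enum_val T predT @^-1: A| = #|A|.
Proof. exact/on_card_preimset/onW_bij/enum_val_bij. Qed.

Section ReducedMonomials.
Variables (F : finFieldType) (k : nat).
Local Notation q := #|F|.
Local Notation point := {ffun 'I_k -> F}.
Local Notation expo := {ffun 'I_k -> 'I_q}.

Definition edeg (e : expo) : nat := (\sum_i e i)%N.
Definition mono (e : expo) (x : point) : F := \prod_i x i ^+ e i.
Definition evalrow (f : point -> F) : 'rV[F]_#|point| := \row_j f (enum_val j).
Definition monorow (e : expo) : 'rV[F]_#|point| := evalrow (mono e).
(* Rows of degree at least b are zeroed rather than dropped, so that all the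
   monomx b have the same shape. *)
Definition monomx (b : nat) : 'M[F]_(#|expo|, #|point|) :=
  \matrix_(i, j)
    if (edeg (enum_val i) < b)%N then mono (enum_val i) (enum_val j) else 0.
Definition maxdeg : nat := (k * q.-1)%N.

Lemma row_monomx b i :
  row i (monomx b) = if (edeg (enum_val i) < b)%N then monorow (enum_val i) else 0.
Proof. by apply/rowP => j; rewrite !mxE; case: ifP; rewrite ?mxE. Qed.

Lemma monorow_sub e b : (edeg e < b)%N -> (monorow e <= monomx b)%MS.
Proof.
move=> e_lt; have := row_sub (enum_rank e) (monomx b).
by rewrite row_monomx enum_rankK e_lt.
Qed.

Lemma monomxS a b : (a <= b)%N -> (monomx a <= monomx b)%MS.
Proof.
move=> le_ab; apply/row_subP => i; rewrite row_monomx.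
case: ifP => [lt_a | _]; last exact: sub0mx.
by apply: monorow_sub; apply: leq_trans le_ab.
Qed.

Lemma maxdegE : maxdeg = (\sum_(i < k) q.-1)%N.
Proof. by rewrite sum_nat_const card_ord. Qed.

Lemma edeg_leq_maxdeg e : (edeg e <= maxdeg)%N.
Proof.
rewrite maxdegE; apply: leq_sum => i _.
by rewrite -ltnS prednK ?ltn_ord // ltnW // finNzRing_gt1.
Qed.

Lemma sum_mono_mul_eq0 e e' :
  (edeg e + edeg e' < maxdeg)%N -> \sum_x mono e x * mono e' x = 0.
Proof.
move=> deg_lt; have [i small_i] : exists i, (e i + e' i < q.-1)%N.
  apply/existsP; apply: contraT => /existsPn large.
  move: deg_lt; rewrite ltnNge /edeg -big_split maxdegE leq_sum // => l _.
  by rewrite leqNgt large.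
have -> : \sum_x mono e x * mono e' x = \sum_(x : point) \prod_l x l ^+ (e l + e' l).
  apply: eq_bigr => x _; rewrite /mono -big_split.
  by apply: eq_bigr => l _; rewrite exprD.
rewrite -(bigA_distr_bigA (fun l t => t ^+ (e l + e' l))) (bigD1 i) //=.
by rewrite sum_expr_lt_card // mul0r.
Qed.

Lemma monomx_orth a b : (a + b <= maxdeg.+1)%N -> monomx a *m (monomx b)^T = 0.
Proof.
move=> le_ab; apply/matrixP => i i'; rewrite !mxE.
under eq_bigr do rewrite !mxE.
case: (ltnP (edeg (enum_val i)) a) => ei_lt; last first.
  by rewrite big1 // => j _; rewrite mul0r.
case: (ltnP (edeg (enum_val i')) b) => ei'_lt; last first.
  by rewrite big1 // => j _; rewrite mulr0.
rewrite -(big_enum_val (fun x => mono _ x * mono _ x)) /= sum_mono_mul_eq0 //.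
by rewrite -ltnS (leq_trans _ le_ab) // -addnS -addSn leq_add.
Qed.

Lemma indicator_mono_expansion (a : point) :
  exists c : expo -> F, forall x, (x == a)%:R = \sum_e c e * mono e x.
Proof.
pose r i := delta_poly (a i).
exists (fun e : expo => \prod_i (r i)`_(e i)) => x.
have -> : \sum_(e : expo) (\prod_i (r i)`_(e i)) * mono e x = \prod_i (r i).[x i].
  under [RHS]eq_bigr do rewrite (horner_coef_wide _ (size_delta_poly _)).
  by rewrite bigA_distr_bigA; apply: eq_bigr => e _; rewrite /mono -big_split.
under eq_bigr do rewrite horner_delta_poly.
have [-> | x_neq_a] := eqVneq x a; first by rewrite big1 // => i _; rewrite eqxx.
have [i xi_neq] : exists i, x i != a i.
  apply/existsP; apply: contraR x_neq_a => /existsPn eq_xa.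
  by apply/eqP/ffunP => i; apply/eqP/negPn/eq_xa.
by rewrite (bigD1 i) //= (negbTE xi_neq) mul0r.
Qed.

Lemma monomx_full : (1%:M <= monomx maxdeg.+1)%MS.
Proof.
apply/row_subP => j; have [c c_expansion] := indicator_mono_expansion (enum_val j).
have -> : row j 1%:M = \sum_e c e *: monorow e.
  apply/rowP => l; rewrite summxE !mxE eq_sym -(inj_eq enum_val_inj) c_expansion.
  by apply: eq_bigr => e _; rewrite !mxE.
by apply: summx_sub => e _; apply/scalemx_sub/monorow_sub; rewrite ltnS edeg_leq_maxdeg.
Qed.

Lemma card_expo : #|expo| = #|point|.
Proof. by rewrite !card_ffun !card_ord. Qed.

Lemma rank_monomx b : \rank (monomx b) = #|[set e : expo | (edeg e < b)%N]|.
Proof.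
set A := [set e : expo | _]; set C := monomx maxdeg.+1 - monomx b.
have rank_low : (\rank (monomx b) <= #|A|)%N.
  rewrite -card_preim_enum_val; apply: rank_leq_card_support => i.
  by rewrite !inE row_monomx => /negbTE ->.
have rank_high : (\rank C <= #|~: A|)%N.
  rewrite -card_preim_enum_val; apply: rank_leq_card_support => i.
  rewrite !inE negbK linearB /= !row_monomx => e_low.
  by rewrite e_low ltnS edeg_leq_maxdeg subrr.
have rank_sum : (#|point| <= \rank (monomx b) + \rank C)%N.
  rewrite -{1}(mxrank1 F #|point|); apply: leq_trans (mxrank_adds_leqif _ _).
  apply/mxrankS/(submx_trans monomx_full).
  by rewrite -{1}(subrK (monomx b) (monomx _)) addrC addmx_sub_adds.
have card_split : (#|A| + #|~: A| = #|point|)%N by rewrite cardsC card_expo.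
lia.
Qed.

Definition compl_expo (e : expo) : expo := [ffun i => rev_ord (e i)].

Lemma compl_expoK : involutive compl_expo.
Proof. by move=> e; apply/ffunP => i; rewrite !ffunE rev_ordK. Qed.

Lemma edeg_compl_expo e : edeg (compl_expo e) = (maxdeg - edeg e)%N.
Proof.
apply/eqP; rewrite -(eqn_add2r (edeg e)) subnK ?edeg_leq_maxdeg //.
rewrite /edeg -big_split maxdegE; apply/eqP/eq_bigr => i _.
by rewrite ffunE /=; case: (e i) => m /=; lia.
Qed.

Lemma card_edeg_lt_compl b : (b <= maxdeg)%N ->
  #|[set e : expo | (edeg e < (maxdeg - b).+1)%N]|
  = #|~: [set e : expo | (edeg e < b)%N]|.
Proof.
move=> b_le; rewrite -(card_imset _ (can_inj compl_expoK)); apply: eq_card => e.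
rewrite !inE -[e in LHS]compl_expoK (mem_imset _ _ (can_inj compl_expoK)) !inE.
by rewrite edeg_compl_expo; have := edeg_leq_maxdeg (compl_expo e); lia.
Qed.

Lemma kermx_tr_monomx b : (b <= maxdeg)%N ->
  (kermx (monomx b)^T == monomx (maxdeg - b).+1)%MS.
Proof.
move=> b_le; have orth : (monomx (maxdeg - b).+1 <= kermx (monomx b)^T)%MS.
  by rewrite sub_kermx monomx_orth // addSn ltnS subnK.
rewrite /eqmx orth andbT -(mxrank_leqif_sup orth).2 mxrank_ker mxrank_tr.
rewrite !rank_monomx card_edeg_lt_compl //; set A := [set e : expo | _].
have card_split : (#|A| + #|~: A| = #|point|)%N by rewrite cardsC card_expo.
by apply/eqP; lia.
Qed.

Definition expo_set (e : expo) (i : 'I_k) (m : 'I_q) : expo :=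
  [ffun l => if l == i then m else e l].

Lemma edeg_expo_set e i m : (edeg (expo_set e i m) + e i = edeg e + m)%N.
Proof.
rewrite /edeg (bigD1 i) //= [in RHS](bigD1 i) //= ffunE eqxx.
have -> : (\sum_(l < k | l != i) expo_set e i m l = \sum_(l < k | l != i) e l)%N.
  by apply: eq_bigr => l l_neq; rewrite ffunE (negbTE l_neq).
by rewrite [LHS]addnC addnA [RHS]addnAC.
Qed.

(* Since x ^+ q = x, the exponent q.-1 wraps around to 1 on multiplication by x. *)
Definition succ_wrap (m : 'I_q) : 'I_q :=
  insubd m (if (m.+1 < q)%N then m.+1 else 1%N).

Lemma val_succ_wrap m : val (succ_wrap m) = if (m.+1 < q)%N then m.+1 else 1%N.
Proof.
have lt_q : ((if (m.+1 < q)%N then m.+1 else 1%N) < q)%N.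
  by case: ifP => // _; apply: finNzRing_gt1.
by rewrite val_insubd lt_q.
Qed.

Definition mulX_expo (e : expo) (i : 'I_k) : expo := expo_set e i (succ_wrap (e i)).

Lemma mono_mulX e i x : mono e x * x i = mono (mulX_expo e i) x.
Proof.
rewrite /mono (bigD1 i) //= [in RHS](bigD1 i) //= ffunE eqxx mulrAC; congr (_ * _).
  rewrite val_succ_wrap -exprSr; case: ltnP => // q_le.
  by rewrite (_ : (e i).+1 = q) ?expf_card //; apply/eqP; rewrite eqn_leq ltn_ord.
by apply: eq_bigr => l l_neq; rewrite ffunE (negbTE l_neq).
Qed.

Lemma edeg_mulX e i : (edeg (mulX_expo e i) <= (edeg e).+1)%N.
Proof.
rewrite -(leq_add2r (e i)) edeg_expo_set addSnnS leq_add2l val_succ_wrap.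
by case: ifP.
Qed.

Lemma mulX_expo_pred (e : expo) i : (0 < e i)%N ->
  exists2 e' : expo, mulX_expo e' i = e & (edeg e' < edeg e)%N.
Proof.
move=> ei_gt0; have pred_lt : ((e i).-1 < q)%N.
  exact: leq_ltn_trans (leq_pred _) (ltn_ord _).
exists (expo_set e i (insubd (e i) (e i).-1)).
  apply/ffunP => l; rewrite !ffunE; case: eqP => // ->; apply: val_inj.
  by rewrite eqxx val_succ_wrap val_insubd pred_lt prednK ?ltn_ord.
by rewrite -(ltn_add2r (e i)) edeg_expo_set ltn_add2l val_insubd pred_lt prednK.
Qed.

Definition coordmx (i : 'I_k) : 'M[F]_#|point| :=
  diag_mx (\row_j (enum_val j : point) i).

Lemma monorow_mulX e i : monorow e *m coordmx i = monorow (mulX_expo e i).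
Proof. by apply/rowP => j; rewrite mul_mx_diag !mxE mono_mulX. Qed.

Lemma monomx_mulX b i : (monomx b *m coordmx i <= monomx b.+1)%MS.
Proof.
apply/row_subP => l; rewrite row_mul row_monomx.
case: ifP => e_lt; last by rewrite mul0mx sub0mx.
by rewrite monorow_mulX monorow_sub // (leq_ltn_trans (edeg_mulX _ _)).
Qed.

Definition restrmx (S : {set point}) : 'M[F]_#|point| :=
  diag_mx (\row_j (enum_val j \in S)%:R).

Lemma rank_restrmx S : \rank (restrmx S) = #|S|.
Proof.
have rank_le A : (\rank (restrmx A) <= #|A|)%N.
  rewrite -card_preim_enum_val; apply: rank_leq_card_support => j.
  by rewrite inE => /negbTE j_out; apply/rowP => l; rewrite !mxE j_out mul0rn.
have split1 : restrmx S + restrmx (~: S) = 1%:M.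
  apply/matrixP => i j; rewrite !mxE inE.
  by case: (i == j); case: (_ \in S); rewrite ?mulr0n ?mulr1n ?addr0 ?add0r.
have rank_sum : (#|point| <= \rank (restrmx S) + \rank (restrmx (~: S)))%N.
  rewrite -{1}(mxrank1 F #|point|) -split1; apply: leq_trans (mxrank_adds_leqif _ _).
  exact/mxrankS/addmx_sub_adds.
apply/eqP; rewrite eqn_leq rank_le /= -(leq_add2r #|~: S|) cardsC.
by apply: leq_trans rank_sum _; rewrite leq_add2l rank_le.
Qed.

Lemma coordmx_restrmxC i S : coordmx i *m restrmx S = restrmx S *m coordmx i.
Proof. exact: diag_mxC. Qed.

Section Saturation.
Variables (S : {set point}) (b : nat).
Hypothesis stable : (monomx b.+1 *m restrmx S <= monomx b *m restrmx S)%MS.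

Lemma monorow_restr_sub e : (monorow e *m restrmx S <= monomx b *m restrmx S)%MS.
Proof.
elim: {e}(edeg e).+1 {-2}e (ltnSn (edeg e)) => // n IH e e_lt.
have [e_low | e_high] := ltnP (edeg e) b.+1.
  exact/(submx_trans _ stable)/submxMr/monorow_sub.
have [i ei_gt0] : exists i, (0 < e i)%N.
  apply/existsP; apply: contraLR e_high => /existsPn ei_eq0; rewrite -ltnNge ltnS.
  by rewrite /edeg big1 // => i _; apply/eqP; rewrite -leqn0 leqNgt ei_eq0.
have [e' e_eq e'_lt] := mulX_expo_pred ei_gt0.
rewrite -e_eq -monorow_mulX -mulmxA coordmx_restrmxC mulmxA.
apply: submx_trans (submxMr (coordmx i) (IH e' (leq_trans e'_lt e_lt))) _.
rewrite -mulmxA -coordmx_restrmxC mulmxA.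
exact/(submx_trans _ stable)/submxMr/monomx_mulX.
Qed.

Lemma card_leq_stable : (#|S| <= #|[set e : expo | (edeg e < b)%N]|)%N.
Proof.
have restr_sub : (restrmx S <= monomx b *m restrmx S)%MS.
  rewrite -{1}[restrmx S]mul1mx; apply: submx_trans (submxMr _ monomx_full) _.
  apply/row_subP => i; rewrite row_mul row_monomx.
  by case: ifP => _; [apply: monorow_restr_sub | rewrite mul0mx sub0mx].
rewrite -rank_restrmx -rank_monomx; apply: leq_trans (mxrankS restr_sub) _.
exact: mxrankM_maxl.
Qed.

End Saturation.

Lemma exists_restr_orth_monomx (S : {set point}) b :
  (#|[set e : expo | (edeg e < b)%N]| < #|S|)%N ->
  exists v : 'rV[F]_#|point|,
    v *m restrmx S *m (monomx b)^T = 0 /\ v *m restrmx S *m (monomx b.+1)^T != 0.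
Proof.
move=> card_lt.
pose A1 := restrmx S *m (monomx b)^T; pose A2 := restrmx S *m (monomx b.+1)^T.
suff /row_subPn [i] : ~~ (kermx A1 <= kermx A2)%MS.
  rewrite sub_kermx => not_ker; exists (row i (kermx A1)).
  by rewrite -!mulmxA -row_mul mulmx_ker row0.
apply: contraL card_lt => /kermx_sub_mxrank rank_le; rewrite -leqNgt.
apply: (@card_leq_stable _ b).
have restr_tr B : \rank (restrmx S *m B^T) = \rank (B *m restrmx S).
  by rewrite -mxrank_tr trmx_mul trmxK tr_diag_mx.
have low_sub : (monomx b *m restrmx S <= monomx b.+1 *m restrmx S)%MS.
  exact/submxMr/monomxS.
by rewrite -(mxrank_leqif_sup low_sub).2 eqn_leq mxrankS // -!restr_tr.
Qed.

Definition mnm_of_expo (e : expo) : 'X_{1..k} := [multinom (e i : nat) | i < k].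

Definition expo_of_mnm (m : 'X_{1..k}) : expo :=
  [ffun i => insubd (Ordinal (ltnW (finNzRing_gt1 F))) (m i)].

Lemma mdeg_mnm_of_expo e : mdeg (mnm_of_expo e) = edeg e.
Proof. by rewrite mdegE; apply: eq_bigr => i _; rewrite mnmE. Qed.

Lemma expo_of_mnmE (m : 'X_{1..k}) i : (m i < q)%N -> (expo_of_mnm m i : nat) = m i.
Proof. by move=> m_lt; rewrite ffunE val_insubd m_lt. Qed.

Lemma monomx_meval_sub (P : {mpoly F[k]}) b :
  (forall m, m \in msupp P -> forall i, (m i < q)%N) -> (msize P <= b)%N ->
  (evalrow (fun a => P.@[a]) <= monomx b)%MS.
Proof.
move=> reduced_P size_P.
have -> : evalrow (fun a => P.@[a]) = \sum_(m <- msupp P) P@_m *: monorow (expo_of_mnm m).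
  apply/rowP => j; rewrite mxE summxE mevalE; apply: eq_big_seq => m m_supp.
  rewrite !mxE /mono; congr (_ * _); apply: eq_bigr => i _.
  by rewrite expo_of_mnmE ?reduced_P.
rewrite big_seq; apply: summx_sub => m m_supp; apply/scalemx_sub/monorow_sub.
apply: leq_trans size_P; apply: leq_trans (msize_mdeg_lt m_supp); rewrite ltnS mdegE.
by apply: eq_leq; apply: eq_bigr => i _; rewrite expo_of_mnmE ?reduced_P.
Qed.

Definition mpoly_of_row (b : nat) (w : 'rV[F]_#|expo|) : {mpoly F[k]} :=
  \sum_(l | (edeg (enum_val l) < b)%N) w 0 l *: 'X_[mnm_of_expo (enum_val l)].

Lemma meval_mpoly_of_row b w (a : point) :
  (mpoly_of_row b w).@[a] = (w *m monomx b) 0 (enum_rank a).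
Proof.
rewrite raddf_sum !mxE big_mkcond /=; apply: eq_bigr => l _.
rewrite !mxE enum_rankK; case: ifP => _; last by rewrite mulr0.
by rewrite mevalZ mevalX; congr (_ * _); apply: eq_bigr => i _; rewrite mnmE.
Qed.

Lemma msupp_mpoly_of_row b w m : m \in msupp (mpoly_of_row b w) ->
  exists2 e : expo, (edeg e < b)%N & m = mnm_of_expo e.
Proof.
move/msupp_sum_le/flatten_mapP => [l]; rewrite mem_filter => /andP[l_low _].
by move/msuppZ_le; rewrite msuppX inE => /eqP ->; exists (enum_val l).
Qed.

Lemma mpoly_of_row_reduced b w m :
  m \in msupp (mpoly_of_row b w) -> forall i, (m i < q)%N.
Proof. by case/msupp_mpoly_of_row => e _ -> i; rewrite mnmE. Qed.

Lemma msize_mpoly_of_row b w : (msize (mpoly_of_row b w) <= b)%N.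
Proof.
rewrite msizeE; apply/bigmax_leqP_seq => m /msupp_mpoly_of_row[e e_low ->] _.
by rewrite mdeg_mnm_of_expo.
Qed.

Lemma exists_reduced_mpoly_on (S : {set point}) b :
  (b <= maxdeg)%N -> (#|[set e : expo | (edeg e < b)%N]| < #|S|)%N ->
  exists P : {mpoly F[k]},
    [/\ forall m, m \in msupp P -> forall i, (m i < q)%N,
        msize P = (maxdeg - b).+1 & forall a : point, P.@[a] != 0 -> a \in S].
Proof.
move=> b_le card_lt; have [v [v_orth v_sharp]] := exists_restr_orth_monomx card_lt.
set g := v *m restrmx S in v_orth v_sharp.
have /submxP[w g_eq] : (g <= monomx (maxdeg - b).+1)%MS.
  have /andP[ker_sub _] := kermx_tr_monomx b_le.
  by apply: submx_trans ker_sub; rewrite sub_kermx v_orth.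
pose P := mpoly_of_row (maxdeg - b).+1 w.
have P_eval (a : point) : P.@[a] = g 0 (enum_rank a).
  by rewrite meval_mpoly_of_row g_eq.
exists P; split.
- exact: mpoly_of_row_reduced.
- (* A smaller msize would make g orthogonal to monomx b.+1 as well. *)
  apply/eqP; rewrite eqn_leq msize_mpoly_of_row ltnNge.
  apply: contra v_sharp => size_le; have : (g <= monomx (maxdeg - b))%MS.
    have -> : g = evalrow (fun a => P.@[a]).
      by apply/rowP => j; rewrite [RHS]mxE P_eval enum_valK.
    exact: monomx_meval_sub (@mpoly_of_row_reduced _ _) size_le.
  case/submxP => w' ->; rewrite -mulmxA monomx_orth ?mulmx0 //.
  by rewrite addnS subnK.
- move=> a; rewrite P_eval /g mul_mx_diag !mxE enum_rankK.
  by case: (a \in S); rewrite ?mulr0 ?eqxx.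
Qed.

End ReducedMonomials.

Theorem lemma3p3 (p d : nat) (Hp : prime p) (Hd : (0 < d)%N) (k : nat)
  (Hk : (d.+1 <= k)%N) (S : {set {ffun 'I_k -> 'F_p}})
  (HS : ('C(d + k + 1, k) + 1 <= #|S|)%N) :
  exists h : {ffun 'I_k -> 'F_p} -> 'F_p,
    has_deg h (k * (p - 1) - (d + 1))%N /\ supp h \subset S.
Proof.
have card_F : #|'F_p| = p := card_Fp Hp.
have deg_le : (d.+1 <= maxdeg 'F_p k)%N.
  rewrite /maxdeg card_F; apply: leq_trans Hk (leq_pmulr _ _).
  by rewrite -subn1 subn_gt0 prime_gt1.
have card_lt :
    (#|[set e : {ffun 'I_k -> 'I_#|'F_p|} | (edeg e < d.+1)%N]| < #|S|)%N.
  apply: leq_ltn_trans (card_ffun_sum_leq _ k d) _.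
  by apply: leq_trans HS; rewrite addn1 ltnS addnC leq_bin2l // addn1.
have [P [P_reduced P_size P_supp]] := exists_reduced_mpoly_on deg_le card_lt.
exists (fun a => P.@[a]); split.
  exists P; split; first split => //.
    by move=> m /P_reduced; rewrite card_F.
  by rewrite P_size /maxdeg card_F subn1 addn1.
by apply/subsetP => a; rewrite inE; apply: P_supp.
Qed.
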